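(* Let $P$ be a convex polygon with no two edges parallel, and let $e_i,e_j$ be edges with $e_i\prec e_j$. (1) In the domain $P$, the function $\mathrm{disprod}_{\ell_i,\ell_j}$ achieves its maximum value at a unique point, denoted $Z_i^j$. (2) The point $Z_i^j$ lies on $\partial P$; moreover it lies in both $[\mathsf{D}_i\circlearrowright \mathsf{D}_j]$ and $(v_{j+1}\circlearrowright v_i)$. (3) If $Z_i^j$ lies in some edge $e_k$, then it is the midpoint of $\mathsf{I}_{i,k}$ and $\mathsf{I}_{j,k}$.
   Context: $P$ is a compact convex polygon with boundary $\partial P$, edges $e_1,\ldots,e_n$ in clockwise order and vertices $v_1,\ldots,v_n$, where $e_i$ is the open segment from $v_i$ to $v_{i+1}$ (indices modulo $n$). $\ell_i$ is the line containing $e_i$, and $\mathsf{I}_{i,j}$ is the intersection point of $\ell_i$ and $\ell_j$. $d_l(X)$ is the distance from $X$ to line $l$ and $\mathrm{disprod}_{l,l'}(X)=d_l(X)d_{l'}(X)$. For distinct edges, $e_i\prec e_j$ (''$e_i$ is chasing $e_j$'') means that $\mathsf{I}_{i,j}$ lies between $e_i$ and $e_j$ in the clockwise sense, i.e. $\mathsf{I}_{i,j}=v_i+t(v_{i+1}-v_i)$ for some $t\ge 1$ (equivalently, the clockwise turning angle from the direction $v_{i+1}-v_i$ to the direction $v_{j+1}-v_j$ lies strictly between $0$ and $\pi$); for any two distinct edges exactly one chases the other. $\mathsf{D}_i$ denotes the unique vertex of $P$ at largest distance from $\ell_i$. For $X,X'\in\partial P$, $[X\circlearrowright X']$ is the closed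 portion of $\partial P$ traversed moving clockwise from $X$ to $X'$, and $(X\circlearrowright X')$ is the same portion without its endpoints. *)

(* points of the plane are pairs (x, y) over R : realType,
   with the usual orientation (x to the right, y up). *)
From HB Require Import structures.
From mathcomp Require Import all_boot all_order all_algebra.
From mathcomp Require Import reals.
Set Implicit Arguments. Unset Strict Implicit. Unset Printing Implicit Defensive.
Import Order.TTheory GRing.Theory Num.Theory.
Local Open Scope ring_scope.

Section Polygon.
Variable R : realType.

Definition psub (p q : R * R) : R * R := (p.1 - q.1, p.2 - q.2).
Definition cross (p q : R * R) : R := p.1 * q.2 - p.2 * q.1.
Definition pnorm (p : R * R) : R := Num.sqrt (p.1 ^+ 2 + p.2 ^+ 2).
Definition midpoint (p q : R * R) : R * R := ((p.1 + q.1) / 2, (p.2 + q.2) / 2).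

Variables (n : nat) (v : nat -> R * R).

Definition V (i : nat) : R * R := v (i %% n)%N.
Definition dir (i : nat) : R * R := psub (V i.+1) (V i).
(* signed area test: < 0 means X strictly to the right of the directed line l_i *)
Definition side (i : nat) (X : R * R) : R := cross (dir i) (psub X (V i)).
Definition seg_pt (k : nat) (t : R) : R * R :=
  ((V k).1 + t * (dir k).1, (V k).2 + t * (dir k).2).

(* n >= 3 and the vertices are in strictly convex position listed clockwise:
   every other vertex lies strictly to the right of each directed edge line. *)
Definition convex_cw : Prop :=
  (3 <= n)%N /\
  forall i m, (i < n)%N -> (m < n)%N -> m != i -> m != (i.+1 %% n)%N ->
    side i (V m) < 0.

Definition no_parallel : Prop :=
  forall i j, (i < n)%N -> (j < n)%N -> i != j -> cross (dir i) (dir j) != 0.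

Definition inP (X : R * R) : Prop := forall i, (i < n)%N -> side i X <= 0.

Definition dist_line (i : nat) (X : R * R) : R := `|side i X| / pnorm (dir i).
Definition disprod (i j : nat) (X : R * R) : R := dist_line i X * dist_line j X.

Definition in_edge (k : nat) (X : R * R) : Prop :=
  exists2 t, 0 < t < 1 & X = seg_pt k t.

Definition bparam (s : R) (X : R * R) : Prop :=
  exists k t, [/\ (k < n)%N, 0 <= t < 1, s = k%:R + t & X = seg_pt k t].

Definition on_boundary (X : R * R) : Prop := exists s, bparam s X.

(* Y in [X ↻ X'] : closed clockwise arc of the boundary from X to X' *)
Definition in_carc (X X' Y : R * R) : Prop :=
  exists a b c, [/\ bparam a X, bparam b Y, bparam c X' &
    ((a <= c /\ a <= b <= c) \/ (c < a /\ (a <= b \/ b <= c)))].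

(* Y in (X ↻ X') : the same arc without its endpoints *)
Definition in_oarc (X X' Y : R * R) : Prop :=
  exists a b c, [/\ bparam a X, bparam b Y, bparam c X' &
    ((a <= c /\ a < b < c) \/ (c < a /\ (a < b \/ b < c)))].

(* I_{i,j} = v_i + Iparam i j * (v_{i+1} - v_i) is the intersection of l_i, l_j *)
Definition Iparam (i j : nat) : R :=
  cross (psub (V j) (V i)) (dir j) / cross (dir i) (dir j).
Definition Ipt (i j : nat) : R * R := seg_pt i (Iparam i j).

Definition chases (i j : nat) : Prop := 1 <= Iparam i j.

Definition isD (i k : nat) : Prop :=
  (k < n)%N /\
  forall m, (m < n)%N -> m != k -> dist_line i (V m) < dist_line i (V k).

End Polygon.

From HB Require Import structures.
From mathcomp Require Import all_boot all_order all_algebra.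
From mathcomp Require Import reals.
From mathcomp Require Import lra ring zify.
Set Implicit Arguments. Unset Strict Implicit. Unset Printing Implicit Defensive.
Import Order.TTheory GRing.Theory Num.Theory.
Local Open Scope ring_scope.

(* Put a := - side i and b := - side j, the unnormalised distances to l_i and l_j: on P
   they are nonnegative affine functions, and disprod is a positive multiple of a * b.
   If Z is a boundary point with a Z, b Z > 0 at which the gradient of a * b is an outer
   normal of P, then b(Z) a + a(Z) b <= 2 a(Z) b(Z) on P, and the weighted AM-GM
   inequality with its equality case makes Z the unique maximiser (a and b determine a
   point since l_i and l_j are not parallel).
   Such a Z is found by walking along the boundary from D_i to D_j. The distances of the
   vertices to a fixed edge line first increase and then decrease (the turning sequence
   changes sign once); this locates D_i and D_j, and shows that the derivative of a * b
   along the walk is nonpositive when leaving D_j. At the first place after D_i where it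
   is not positive, we are either at a vertex whose normal cone contains the gradient, or
   inside an edge e_k where the derivative vanishes; there a * b restricted to l_k is a
   quadratic with roots I_{i,k} and I_{j,k}, so Z is their midpoint. *)

Section PlaneAlgebra.
Variable R : realType.
Implicit Types (a b t x y : R) (d p q u w X Y : R * R).

Definition comb2 a p b q : R * R := (a * p.1 + b * q.1, a * p.2 + b * q.2).

Lemma cross_antisym p q : cross p q = - cross q p.
Proof. by rewrite /cross; ring. Qed.

Lemma cross_comb2r d a p b q : cross d (comb2 a p b q) = a * cross d p + b * cross d q.
Proof. by rewrite /cross /=; ring. Qed.

Lemma cross_plucker p q u w :
  cross p q * cross u w = cross p u * cross q w - cross p w * cross q u.
Proof. by rewrite /cross; ring. Qed.

Lemma cross_cone_le0 d1 d2 X w : cross d1 d2 < 0 ->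
  cross d1 X <= 0 -> cross d2 X <= 0 -> 0 <= cross d1 w -> cross d2 w <= 0 ->
  cross X w <= 0.
Proof.
move=> d12 h1X h2X h1w h2w.
have id : cross d1 d2 * cross X w = cross d1 X * cross d2 w - cross d2 X * cross d1 w.
  by rewrite /cross; ring.
nra.
Qed.

Lemma cross_lt0_trans_cone u w z d : cross u w < 0 -> cross w z < 0 ->
  0 < cross u d -> 0 < cross w d -> 0 < cross z d -> cross u z < 0.
Proof.
move=> uw wz ud wd zd.
have id : cross w d * cross u z = cross u w * cross z d + cross u d * cross w z.
  by rewrite /cross; ring.
nra.
Qed.

Lemma eq_of_cross_psub0 d1 d2 X Y : cross d1 d2 != 0 ->
  cross d1 (psub X Y) = 0 -> cross d2 (psub X Y) = 0 -> X = Y.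
Proof.
move=> /negPf d12 h1 h2.
have e1 : cross d1 d2 * (X.1 - Y.1) = d2.1 * cross d1 (psub X Y) - d1.1 * cross d2 (psub X Y).
  by rewrite /cross /psub /=; ring.
have e2 : cross d1 d2 * (X.2 - Y.2) = d2.2 * cross d1 (psub X Y) - d1.2 * cross d2 (psub X Y).
  by rewrite /cross /psub /=; ring.
move: e1 e2; rewrite h1 h2 !mulr0 subr0 => /eqP + /eqP.
rewrite !mulf_eq0 d12 !subr_eq0 /= => /eqP e1 /eqP e2.
by clear h1 h2; case: X Y e1 e2 => [x1 x2] [y1 y2] /= -> ->.
Qed.

Lemma midpoint_shift X d mu nu : mu + nu = 0 ->
  midpoint (X.1 + mu * d.1, X.2 + mu * d.2) (X.1 + nu * d.1, X.2 + nu * d.2) = X.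
Proof.
move=> /eqP; rewrite addr_eq0 => /eqP ->; case: X => x1 x2.
by rewrite /midpoint /=; congr (_, _); field.
Qed.

Lemma convex_comb_nonpos_eq0 t x y : 0 < t < 1 -> x <= 0 -> y <= 0 ->
  (1 - t) * x + t * y = 0 -> x = 0 /\ y = 0.
Proof. by move=> /andP [t0 t1] x0 y0 e; split; nra. Qed.

Lemma amgm_weighted a b x y : 0 < a -> 0 < b -> 0 <= x -> 0 <= y ->
  b * x + a * y <= 2 * a * b -> x * y <= a * b /\ (x * y = a * b -> x = a /\ y = b).
Proof.
move=> a0 b0 x0 y0 hsum.
have sq_le : (b * x + a * y) ^+ 2 <= (2 * a * b) ^+ 2 by rewrite ler_sqr ?nnegrE; nra.
(* [4ab (xy - ab) = (bx + ay)^2 - (2ab)^2 - (bx - ay)^2] *)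
have key : 4 * (a * b) * (x * y - a * b) <= - (b * x - a * y) ^+ 2 by nra.
have le : x * y <= a * b.
  have := sqr_ge0 (b * x - a * y); have := mulr_gt0 a0 b0; nra.
split=> // exy.
have /eqP : (b * x - a * y) ^+ 2 = 0.
  by apply/le_anti; move: key; rewrite exy subrr mulr0 oppr_ge0 => ->; rewrite sqr_ge0.
rewrite sqrf_eq0 subr_eq0 => /eqP ebx.
have sq : (b * x) ^+ 2 = (a * b) ^+ 2.
  by rewrite expr2 {2}ebx [RHS]expr2 -{2}exy; ring.
have bx_ab : b * x = a * b.
  by apply/eqP; rewrite -(eqrXn2 (ltn0Sn 1)) ?sq ?mulr_ge0 // ltW.
have ex : x = a by apply: (mulfI (lt0r_neq0 b0)); rewrite bx_ab mulrC.
by split=> //; apply: (mulfI (lt0r_neq0 a0)); rewrite -ebx ex mulrC.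
Qed.

End PlaneAlgebra.

Section SignChange.
Variable R : realType.
Implicit Types (sg H : nat -> R) (N p : nat).

Definition sign_change_at sg N p := (1 <= p <= N)%N /\
  forall s, (s <= N)%N -> ((s < p)%N -> 0 < sg s) /\ ((p <= s)%N -> sg s < 0).

Lemma sign_change_exists sg N : 0 < sg 0%N -> sg N < 0 ->
  (forall s, (s <= N)%N -> sg s != 0) ->
  (forall s, (s < N)%N -> ~ (sg s < 0 /\ 0 < sg s.+1)) ->
  exists p, sign_change_at sg N p.
Proof.
move=> sg0 sgN sg_neq0 no_rise.
have ex_neg : exists s, (s <= N)%N && (sg s < 0) by exists N; rewrite leqnn sgN.
case: (ex_minnP ex_neg) => p /andP [pN sgp] p_min.
have p_gt0 : (0 < p)%N by case: p sgp {pN p_min} => // /(lt_trans sg0); rewrite ltxx.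
have neg_from_p k : (p + k <= N)%N -> sg (p + k)%N < 0.
  elim: k => [|k IH] hk; first by rewrite addn0.
  have := sg_neq0 _ hk; rewrite addnS neq_lt => /orP [//|pos].
  by case: (no_rise (p + k)%N); [lia | split=> //; apply: IH; lia].
exists p; split=> [|s sN]; first by rewrite p_gt0.
split=> [sp | ps]; last by rewrite -(subnKC ps); apply: neg_from_p; lia.
have := sg_neq0 _ sN; rewrite neq_lt => /orP [neg|//].
by have := p_min s; rewrite sN neg leqNgt sp => /(_ isT).
Qed.

Lemma sign_change_argmax H sg N p : (forall s, H s.+1 - H s = sg s) ->
  sign_change_at sg N p -> forall s, (s <= N.+1)%N -> s != p -> H s < H p.
Proof.
move=> dH [/andP [p1 pN] sg_sign] s sN sp.
have incr : {in [pred s | s <= p]%N &, {homo H : x y / (x < y)%N >-> x < y}}.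
  apply: homo_ltn_in => [y x z | x y xD yD k | x _ xp].
  - exact: lt_trans.
  - by rewrite !inE in xD yD *; lia.
  - by rewrite inE in xp; rewrite -subr_gt0 dH; apply: (sg_sign x _).1; lia.
have decr : {in [pred s | p <= s <= N.+1]%N &, {homo H : x y / (x < y)%N >-> y < x}}.
  apply: homo_ltn_in => [y x z xy yz | x y xD yD k | x xD xD1].
  - exact: lt_trans yz xy.
  - by rewrite !inE in xD yD *; lia.
  - by rewrite !inE in xD xD1; rewrite -subr_lt0 dH; apply: (sg_sign x _).2; lia.
case: (ltngtP s p) => [lt | gt | eq]; last by rewrite eq eqxx in sp.
  by apply: incr; rewrite ?inE // ltnW.
by apply: decr; rewrite ?inE; lia.
Qed.

End SignChange.

Section CyclicOrder.
Variable R : realType.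
Implicit Types (a b c t : R) (ma mb mc : nat).

Definition in_cyc_closed a c b := (a <= c /\ a <= b <= c) \/ (c < a /\ (a <= b \/ b <= c)).
Definition in_cyc_open a c b := (a <= c /\ a < b < c) \/ (c < a /\ (a < b \/ b < c)).

Lemma in_cyc_closed_nat ma mb mc t : 0 <= t < 1 -> (mb = mc -> t = 0) ->
  ((ma <= mc /\ ma <= mb <= mc) \/ (mc < ma /\ (ma <= mb \/ mb <= mc)))%N ->
  in_cyc_closed ma%:R mc%:R (mb%:R + t).
Proof.
move=> /andP [t0 t1] t_eq0 hm.
have ab : (ma <= mb)%N -> ma%:R <= mb%:R + t :> R.
  by rewrite -(ler_nat R) => h; apply: ler_wpDr.
have bc : (mb <= mc)%N -> mb%:R + t <= mc%:R :> R.
  rewrite leq_eqVlt => /orP [/eqP e | lt]; first by rewrite (t_eq0 e) e addr0.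
  by move: lt; rewrite -(ler_nat R) -natr1; lra.
rewrite /in_cyc_closed !ler_nat ltr_nat.
by case: hm => [[-> /andP [/ab -> /bc ->]] | [-> [/ab -> | /bc ->]]]; auto.
Qed.

Lemma in_cyc_open_nat ma mb mc t : 0 <= t < 1 -> (ma = mb -> 0 < t) ->
  ((ma <= mc /\ ma <= mb < mc) \/ (mc < ma /\ (ma <= mb \/ mb < mc)))%N ->
  in_cyc_open ma%:R mc%:R (mb%:R + t).
Proof.
move=> /andP [t0 t1] t_gt0 hm.
have ab : (ma <= mb)%N -> ma%:R < mb%:R + t :> R.
  rewrite leq_eqVlt => /orP [/eqP e | lt]; first by rewrite e ltrDl t_gt0.
  by move: lt; rewrite -(ler_nat R) -natr1; lra.
have bc : (mb < mc)%N -> mb%:R + t < mc%:R :> R.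
  by rewrite -(ler_nat R) -natr1; lra.
rewrite /in_cyc_open ler_nat ltr_nat.
by case: hm => [[-> /andP [/ab -> /bc ->]] | [-> [/ab -> | /bc ->]]]; auto.
Qed.

End CyclicOrder.

Section ModularArithmetic.
Variable n : nat.

Lemma addn_modn_neq e s : (0 < s < n)%N -> ((e + s) %% n != e %% n)%N.
Proof. by rewrite -{2}[e]addn0 eqn_modDl mod0n; case/andP=> s0 sn; rewrite modn_small -?lt0n. Qed.

Lemma addn_modn_neqS e s : (1 < s < n)%N -> ((e + s) %% n != e.+1 %% n)%N.
Proof. by move=> hs; rewrite -addn1 eqn_modDl !modn_small //; lia. Qed.

Lemma shift_modn_surj x m : (m < n)%N -> exists2 s, (s < n)%N & ((x + s) %% n)%N = m.
Proof.
move=> mn; have n_gt0 : (0 < n)%N by apply: leq_ltn_trans mn.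
exists ((m + n - x %% n) %% n)%N; first by rewrite ltn_pmod.
have xn : (x %% n < n)%N by rewrite ltn_pmod.
rewrite modnDmr -modnDml.
have -> : (x %% n + (m + n - x %% n) = m + n)%N by lia.
by rewrite modnDr modn_small.
Qed.

Lemma addn_modn_cases i s : (i < n)%N -> (s <= n)%N ->
  ((i + s) %% n = i + s /\ i + s < n)%N \/ ((i + s) %% n + n = i + s /\ n <= i + s)%N.
Proof.
move=> iN sN; have [lt | ge] := ltnP (i + s) n; first by left; rewrite modn_small.
right; split=> //; rewrite -{1}(subnK ge) modnDr modn_small; lia.
Qed.

End ModularArithmetic.

Section Polygon.
Variable R : realType.
Variables (n : nat) (v : nat -> R * R).
Hypothesis convex : convex_cw n v.
Hypothesis no_par : no_parallel n v.
Implicit Types (X Y Z : R * R) (t : R).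

Lemma n_ge3 : (3 <= n)%N. Proof. by case: convex. Qed.
Lemma n_gt0 : (0 < n)%N. Proof. by apply: leq_trans n_ge3. Qed.

Lemma V_eqmod x y : x = y %[mod n] -> V n v x = V n v y.
Proof. by rewrite /V => ->. Qed.

Lemma dir_eqmod x y : x = y %[mod n] -> dir n v x = dir n v y.
Proof.
move=> xy; rewrite /dir (V_eqmod xy); congr psub; apply: V_eqmod.
by rewrite -addn1 -modnDml xy modnDml addn1.
Qed.

Lemma side_eqmod x y X : x = y %[mod n] -> side n v x X = side n v y X.
Proof. by move=> xy; rewrite /side (dir_eqmod xy) (V_eqmod xy). Qed.

Lemma seg_pt_eqmod x y t : x = y %[mod n] -> seg_pt n v x t = seg_pt n v y t.
Proof. by move=> xy; rewrite /seg_pt (dir_eqmod xy) (V_eqmod xy). Qed.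

Lemma seg_pt0 q : seg_pt n v q 0 = V n v q.
Proof. by rewrite /seg_pt !mul0r !addr0 -surjective_pairing. Qed.

Lemma side_edge_start e : side n v e (V n v e) = 0.
Proof. by rewrite /side /cross /psub /=; ring. Qed.

Lemma side_edge_end e : side n v e (V n v e.+1) = 0.
Proof. by rewrite /side /dir /cross /psub /=; ring. Qed.

Lemma side_seg_pt_self e t : side n v e (seg_pt n v e t) = 0.
Proof. by rewrite /side /seg_pt /cross /psub /=; ring. Qed.

Lemma side_sub e X Y : side n v e X - side n v e Y = cross (dir n v e) (psub X Y).
Proof. by rewrite /side /cross /psub /=; ring. Qed.

Lemma side_succ e X : cross (dir n v e) (psub X (V n v e.+1)) = side n v e X.
Proof. by rewrite /side /dir /cross /psub /=; ring. Qed.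

Lemma side_V_step e k :
  side n v e (V n v k) - side n v e (V n v k.+1) = cross (dir n v k) (dir n v e).
Proof. by rewrite /side /dir /cross /psub /=; ring. Qed.

Lemma cross_psub_seg_pt q t d :
  cross (psub (seg_pt n v q t) (V n v q.+1)) d = (t - 1) * cross (dir n v q) d.
Proof. by rewrite /seg_pt /dir /cross /psub /=; ring. Qed.

Lemma side_seg_pt e q t : side n v e (seg_pt n v q t) =
  (1 - t) * side n v e (V n v q) + t * side n v e (V n v q.+1).
Proof. by rewrite /side /seg_pt /dir /cross /psub /=; ring. Qed.

Lemma side_V_lt e m : (m %% n != e %% n)%N -> (m %% n != e.+1 %% n)%N ->
  side n v e (V n v m) < 0.
Proof.
have e_mod : e = e %% n %[mod n] by rewrite modn_mod.
rewrite (side_eqmod _ e_mod) -(V_eqmod (modn_mod m n)) -[e.+1]addn1 -modnDml addn1.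
case: convex => _ /[apply]; apply; apply: ltn_pmod n_gt0.
Qed.

Lemma side_V_le e m : side n v e (V n v m) <= 0.
Proof.
have [em | me] := eqVneq (m %% n)%N (e %% n)%N.
  by rewrite (V_eqmod em) side_edge_start.
have [em1 | me1] := eqVneq (m %% n)%N (e.+1 %% n)%N.
  by rewrite (V_eqmod em1) side_edge_end.
exact/ltW/side_V_lt.
Qed.

Lemma side_V_eq0 e m : side n v e (V n v m) = 0 ->
  (m %% n)%N = (e %% n)%N \/ (m %% n)%N = (e.+1 %% n)%N.
Proof.
have [-> | me] := eqVneq (m %% n)%N (e %% n)%N; first by left.
have [-> | me1] := eqVneq (m %% n)%N (e.+1 %% n)%N; first by right.
by move=> h; have := side_V_lt me me1; rewrite h ltxx.
Qed.

Lemma side_V_shift_lt e s : (1 < s < n)%N -> side n v e (V n v (e + s)) < 0.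
Proof.
move=> hs; apply: side_V_lt; last exact: addn_modn_neqS.
by apply: addn_modn_neq; lia.
Qed.

Lemma cross_dir_succ_lt0 k : cross (dir n v k) (dir n v k.+1) < 0.
Proof.
have := @side_V_shift_lt k 2 n_ge3.
by rewrite addn2 /side /dir /cross /psub /=; lra.
Qed.

Lemma side_V_succ_identity e k : cross (dir n v k) (dir n v k.+1) * side n v e (V n v k.+1) =
  side n v k (V n v e) * cross (dir n v k.+1) (dir n v e) -
  side n v k.+1 (V n v e) * cross (dir n v k) (dir n v e).
Proof. by rewrite /side /dir /cross /psub /=; ring. Qed.

Lemma cross_dir_neq0 x y : (x %% n != y %% n)%N -> cross (dir n v x) (dir n v y) != 0.
Proof.
rewrite (dir_eqmod (esym (modn_mod x n))) (dir_eqmod (esym (modn_mod y n))).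
by apply: no_par; rewrite ltn_pmod ?n_gt0.
Qed.

(* the increase of the distance to [l_e] from vertex [e + s.+1] to vertex [e + s.+2] *)
Definition turning e s := cross (dir n v (e + s.+1)) (dir n v e).

Lemma turning_sign_change e : exists p, sign_change_at (turning e) (n - 2) p.
Proof.
have n3 := n_ge3.
apply: sign_change_exists => [||s sN|s sN [neg pos]]; rewrite /turning.
- rewrite -side_V_step addn1 side_edge_end.
  by have := @side_V_shift_lt e 2 n3; rewrite addn2; lra.
- rewrite -side_V_step.
  have -> : (e + (n - 2).+1).+1 = (e + n)%N by lia.
  have -> : V n v (e + n) = V n v e by apply: V_eqmod; rewrite modnDr.
  have -> : (e + (n - 2).+1 = e + (n - 1))%N by lia.
  have n1 : (1 < n - 1 < n)%N by lia.
  by rewrite side_edge_start; have := @side_V_shift_lt e (n - 1) n1; lra.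
- by apply/cross_dir_neq0/addn_modn_neq; lia.
- (* a rise [turning e s < 0 < turning e s.+1] would put [V (e + s.+2)] on [l_e] or
     to its left, by [side_V_succ_identity] *)
  move: neg pos; rewrite /turning => neg pos.
  have s2 : (1 < s.+2 < n)%N by lia.
  have := side_V_succ_identity e (e + s.+1); rewrite -addnS.
  have := @side_V_shift_lt e s.+2 s2; have := cross_dir_succ_lt0 (e + s.+1).
  have := side_V_le (e + s.+1) e; have := side_V_le (e + s.+1).+1 e.
  rewrite -addnS; nra.
Qed.

Lemma pnorm_dir_gt0 k : 0 < pnorm (dir n v k).
Proof.
have := cross_dir_succ_lt0 k; rewrite /pnorm sqrtr_gt0 /cross.
case: (dir n v k) => x y /= turn.
rewrite lt_neqAle addr_ge0 ?sqr_ge0 // andbT eq_sym paddr_eq0 ?sqr_ge0 // !sqrf_eq0.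
by apply: contraTN turn => /andP [/eqP -> /eqP ->]; rewrite !mul0r subrr ltxx.
Qed.

Lemma side_le0_of_inP e X : inP n v X -> side n v e X <= 0.
Proof. by move=> XP; rewrite (side_eqmod _ (esym (modn_mod e n))) XP ?ltn_pmod ?n_gt0. Qed.

Lemma seg_pt_inP q t : 0 <= t <= 1 -> inP n v (seg_pt n v q t).
Proof.
move=> /andP [t0 t1] e _; rewrite side_seg_pt.
by have := side_V_le e q; have := side_V_le e q.+1; nra.
Qed.

Lemma dist_line_side e X : side n v e X <= 0 ->
  dist_line n v e X = - side n v e X / pnorm (dir n v e).
Proof. by move=> le0; rewrite /dist_line ler0_norm. Qed.

Lemma disprod_inP i j X : inP n v X -> disprod n v i j X =
  (- side n v i X) * (- side n v j X) / (pnorm (dir n v i) * pnorm (dir n v j)).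
Proof. by move=> XP; rewrite /disprod !dist_line_side ?side_le0_of_inP // invfM; ring. Qed.

Lemma isD_turning e p : sign_change_at (turning e) (n - 2) p ->
  isD n v e ((e + p.+1) %% n).
Proof.
move=> sc; split; first by rewrite ltn_pmod ?n_gt0.
move=> m mn; have [s sn <-] := shift_modn_surj e.+1 mn; move=> mD.
have sp : s != p by apply: contra_neq mD => ->; rewrite addSnnS.
have dH k : - side n v e (V n v (e + k.+2)) - - side n v e (V n v (e + k.+1)) = turning e k.
  by rewrite /turning -side_V_step addnS; ring.
have sN : (s <= (n - 2).+1)%N by have := n_ge3; lia.
have := sign_change_argmax dH sc sN sp.
rewrite !(V_eqmod (modn_mod _ n)) addSnnS !dist_line_side ?side_V_le //.
by rewrite ltr_pM2r ?invr_gt0 ?pnorm_dir_gt0.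
Qed.

Lemma seg_pt1 q : seg_pt n v q 1 = V n v q.+1.
Proof. by apply: injective_projections; rewrite /= !mul1r addrC subrK. Qed.

Lemma seg_pt_inj q : injective (seg_pt n v q).
Proof.
move=> u u' e.
have : (u - u') * cross (dir n v q) (dir n v q.+1) = 0.
  transitivity (cross (psub (seg_pt n v q u) (seg_pt n v q u')) (dir n v q.+1)).
    by rewrite /seg_pt /cross /psub /=; ring.
  by rewrite e /cross /psub !subrr !mul0r subrr.
by move/eqP; rewrite mulf_eq0 (lt_eqF (cross_dir_succ_lt0 q)) orbF subr_eq0 => /eqP.
Qed.

Lemma V_notin_edge k m : ~ in_edge n v k (V n v m).
Proof.
case=> u /andP [u0 u1] Vm.
have := side_seg_pt_self k u; rewrite -Vm => /side_V_eq0 [] /V_eqmod; rewrite Vm.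
  by rewrite -seg_pt0 => /seg_pt_inj u_eq0; rewrite u_eq0 ltxx in u0.
by rewrite -seg_pt1 => /seg_pt_inj u_eq1; rewrite u_eq1 ltxx in u1.
Qed.

Lemma in_edge_seg_pt q t k : 0 <= t < 1 -> (k < n)%N ->
  in_edge n v k (seg_pt n v q t) -> 0 < t /\ k = (q %% n)%N.
Proof.
move=> /andP [t0 t1] kn hk.
have [t_eq0 | t_neq0] := eqVneq t 0.
  by move: hk; rewrite t_eq0 seg_pt0 => /V_notin_edge.
have t_gt0 : 0 < t by rewrite lt_neqAle eq_sym t_neq0.
split=> //; case: hk => u _ /(congr1 (side n v k)).
rewrite side_seg_pt_self side_seg_pt => convex0.
have t01 : 0 < t < 1 by rewrite t_gt0.
have [/side_V_eq0 [-> | qk1] /side_V_eq0 q1] :=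
  convex_comb_nonpos_eq0 t01 (side_V_le k q) (side_V_le k q.+1) convex0.
  by rewrite modn_small.
have q1k2 : (q.+1 %% n = k.+2 %% n)%N by rewrite -addn1 -modnDml qk1 modnDml addn1.
have n3 := n_ge3.
have n2 : (0 < 2 < n)%N by [].
have n1 : (0 < 1 < n)%N by lia.
case: q1 => [q1k | q1k1].
  by have := addn_modn_neq k n2; rewrite addn2 -q1k2 q1k eqxx.
by have := addn_modn_neq q n1; rewrite addn1 q1k1 -qk1 eqxx.
Qed.

Lemma bparam_seg_pt x t : 0 <= t < 1 -> bparam n v (((x %% n)%N)%:R + t) (seg_pt n v x t).
Proof.
exists (x %% n)%N, t; split; rewrite ?ltn_pmod ?n_gt0 //.
exact/esym/seg_pt_eqmod/modn_mod.
Qed.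

Lemma bparam_V x : bparam n v ((x %% n)%N)%:R (V n v x).
Proof. by rewrite -seg_pt0 -[_%:R]addr0; apply: bparam_seg_pt; rewrite lexx ltr01. Qed.

Lemma in_carc_shift i sx sy sz t : (i < n)%N -> (0 < sx <= sy)%N -> (sy < n)%N ->
  (sy <= sz <= n)%N -> 0 <= t < 1 -> (sy = sz -> t = 0) ->
  in_carc n v (V n v (i + sx)) (V n v (i + sz)) (seg_pt n v (i + sy) t).
Proof.
move=> iN sxy syn syz t01 t0.
exists ((i + sx) %% n)%N%:R, (((i + sy) %% n)%N%:R + t), ((i + sz) %% n)%N%:R.
split; [exact: bparam_V | exact: bparam_seg_pt | exact: bparam_V |].
have [sxN syN szN] : [/\ sx <= n, sy <= n & sz <= n]%N by split; lia.
have := addn_modn_cases iN sxN; have := addn_modn_cases iN syN.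
have := addn_modn_cases iN szN.
move: ((i + sx) %% n)%N ((i + sy) %% n)%N ((i + sz) %% n)%N => a b c hc hb ha.
by apply: in_cyc_closed_nat => // [bc|]; [apply: t0 |]; lia.
Qed.

Lemma in_oarc_shift i sx sy sz t : (i < n)%N -> (0 < sx <= sy)%N ->
  (sy < sz <= n)%N -> 0 <= t < 1 -> (sx = sy -> 0 < t) ->
  in_oarc n v (V n v (i + sx)) (V n v (i + sz)) (seg_pt n v (i + sy) t).
Proof.
move=> iN sxy syz t01 t0.
exists ((i + sx) %% n)%N%:R, (((i + sy) %% n)%N%:R + t), ((i + sz) %% n)%N%:R.
split; [exact: bparam_V | exact: bparam_seg_pt | exact: bparam_V |].
have [sxN syN szN] : [/\ sx <= n, sy <= n & sz <= n]%N by split; lia.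
have := addn_modn_cases iN sxN; have := addn_modn_cases iN syN.
have := addn_modn_cases iN szN.
move: ((i + sx) %% n)%N ((i + sy) %% n)%N ((i + sz) %% n)%N => a b c hc hb ha.
by apply: in_cyc_open_nat => // [ab|]; [apply: t0 |]; lia.
Qed.

End Polygon.

Section Intersection.
Variable R : realType.
Variables (n : nat) (v : nat -> R * R).
Implicit Types (X Z : R * R).

Lemma side_Ipt_self i k : side n v i (Ipt n v i k) = 0.
Proof. exact: side_seg_pt_self. Qed.

Lemma side_Ipt i k : cross (dir n v i) (dir n v k) != 0 -> side n v k (Ipt n v i k) = 0.
Proof. by rewrite /Ipt /Iparam /side /seg_pt /cross /psub /= => ?; field. Qed.

Lemma Ipt_shift i k Z : cross (dir n v i) (dir n v k) != 0 -> side n v k Z = 0 ->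
  let mu := side n v i Z / cross (dir n v k) (dir n v i) in
  Ipt n v i k = (Z.1 + mu * (dir n v k).1, Z.2 + mu * (dir n v k).2).
Proof.
move=> ik kZ mu; set P := (_, _).
have ki : cross (dir n v k) (dir n v i) != 0 by rewrite cross_antisym oppr_eq0.
have iP : side n v i P = 0.
  by move: ki; rewrite /P /mu /side /cross /psub /= => ki; field.
have kP : side n v k P = 0 by rewrite -kZ /P /side /cross /psub /=; ring.
by apply: (eq_of_cross_psub0 ik); rewrite -side_sub ?side_Ipt_self ?side_Ipt ?iP ?kP ?subrr.
Qed.
End Intersection.

Section Maximizer.
Variable R : realType.
Variables (n : nat) (v : nat -> R * R).
Hypothesis convex : convex_cw n v.
Hypothesis no_par : no_parallel n v.
Variables i j : nat.
Hypotheses (iN : (i < n)%N) (jN : (j < n)%N) (ij : i != j).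
Implicit Types (X Y Z : R * R).

(* [cross d (prod_grad Z)] is the derivative at [Z], in direction [d], of the product
   [side n v i * side n v j] of the (unnormalised) distances to [l_i] and [l_j]. *)
Definition prod_grad Z := comb2 (- side n v j Z) (dir n v i) (- side n v i Z) (dir n v j).

Lemma cross_psub_prod_grad X Z : cross (psub X Z) (prod_grad Z) =
  - side n v j Z * (side n v i Z - side n v i X) - side n v i Z * (side n v j Z - side n v j X).
Proof. by rewrite /prod_grad /side /cross /psub /=; ring. Qed.

Lemma prod_grad_support q Z :
  0 <= cross (dir n v q) (prod_grad Z) -> cross (dir n v q.+1) (prod_grad Z) <= 0 ->
  cross (psub Z (V n v q.+1)) (prod_grad Z) = 0 ->
  forall X, inP n v X -> cross (psub X Z) (prod_grad Z) <= 0.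
Proof.
move=> wq wq1 Zq X XP; set w := prod_grad Z.
have -> : cross (psub X Z) w = cross (psub X (V n v q.+1)) w - cross (psub Z (V n v q.+1)) w.
  by rewrite /cross /psub /=; ring.
rewrite Zq subr0; apply: (cross_cone_le0 (cross_dir_succ_lt0 convex q)) => //.
  by rewrite side_succ side_le0_of_inP.
exact: side_le0_of_inP.
Qed.

Lemma disprod_argmax Z : inP n v Z -> 0 < - side n v i Z -> 0 < - side n v j Z ->
  (forall X, inP n v X -> cross (psub X Z) (prod_grad Z) <= 0) ->
  (forall Y, inP n v Y -> disprod n v i j Y <= disprod n v i j Z) /\
  (forall Y, inP n v Y -> disprod n v i j Y = disprod n v i j Z -> Y = Z).
Proof.
move=> ZP a0 b0 supp.
have nonneg k Y : inP n v Y -> 0 <= - side n v k Y by move=> YP; rewrite oppr_ge0 side_le0_of_inP.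
have bound Y : inP n v Y -> - side n v j Z * - side n v i Y + - side n v i Z * - side n v j Y
    <= 2 * - side n v i Z * - side n v j Z.
  by move=> /supp; rewrite cross_psub_prod_grad; lra.
have amgm Y (YP : inP n v Y) := amgm_weighted a0 b0 (nonneg i Y YP) (nonneg j Y YP) (bound Y YP).
have K_gt0 : 0 < (pnorm (dir n v i) * pnorm (dir n v j))^-1.
  by rewrite invr_gt0 mulr_gt0 ?pnorm_dir_gt0.
split=> Y YP; rewrite !disprod_inP //.
  by rewrite ler_pM2r //; exact: (amgm Y YP).1.
move=> /(mulIf (lt0r_neq0 K_gt0)) /(amgm Y YP).2 [ai bj].
by apply: (eq_of_cross_psub0 (no_par iN jN ij)); rewrite -side_sub; lra.
Qed.

Lemma midpoint_of_tangent k Z : (k < n)%N -> side n v k Z = 0 ->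
  0 < - side n v i Z -> 0 < - side n v j Z -> cross (dir n v k) (prod_grad Z) = 0 ->
  Z = midpoint (Ipt n v i k) (Ipt n v j k).
Proof.
move=> kN kZ a0 b0 tangent.
have ik : cross (dir n v i) (dir n v k) != 0.
  by apply: no_par => //; apply: contraTneq a0 => ->; rewrite kZ oppr0 ltxx.
have jk : cross (dir n v j) (dir n v k) != 0.
  by apply: no_par => //; apply: contraTneq b0 => ->; rewrite kZ oppr0 ltxx.
rewrite (Ipt_shift ik kZ) (Ipt_shift jk kZ) midpoint_shift //.
move: tangent ik jk; rewrite /prod_grad cross_comb2r !(cross_antisym (dir n v _) (dir n v k)).
set al := cross (dir n v k) (dir n v i); set be := cross (dir n v k) (dir n v j).
rewrite !oppr_eq0 => tangent al0 be0.
have -> : side n v i Z / al + side n v j Z / be =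
    - (- side n v j Z * al + - side n v i Z * be) / (al * be).
  by field; rewrite al0 be0.
by rewrite tangent oppr0 mul0r.
Qed.

Lemma chases_signs : chases n v i j ->
  cross (dir n v i) (dir n v j) < 0 /\ side n v j (V n v i) < 0.
Proof.
rewrite /chases; have := no_par iN jN ij; set c := cross _ _ => c0 Ip1.
have side_ij : side n v j (V n v i) = Iparam n v i j * c.
  by rewrite /Iparam -/c divfK // /side /cross /psub /=; ring.
have := side_V_le convex j i; rewrite side_ij.
have [c_lt0 | c_gt0 | c_eq0] := ltgtP c 0; last by rewrite c_eq0 eqxx in c0.
  by split=> //; nra.
by nra.
Qed.

Definition Z_spec Z :=
  [/\ inP n v Z,
      (forall Y, inP n v Y -> disprod n v i j Y <= disprod n v i j Z),
      (forall Y, inP n v Y -> disprod n v i j Y = disprod n v i j Z -> Y = Z),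
      on_boundary n v Z /\
      (exists ki kj, [/\ isD n v i ki, isD n v j kj &
                         in_carc n v (V n v ki) (V n v kj) Z]) /\
      in_oarc n v (V n v j.+1) (V n v i) Z &
      forall k, (k < n)%N -> in_edge n v k Z -> Z = midpoint (Ipt n v i k) (Ipt n v j k)].

Section Search.
Hypothesis chase : chases n v i j.
(* [J] is the offset of [j] from [i]; by [isD_turning], [D_i] and [D_j] are the vertices
   [i + pI.+1] and [j + pJ.+1]. *)
Variables J pI pJ : nat.
Hypothesis J_bounds : (0 < J < n)%N.
Hypothesis iJ_j : (i + J = j %[mod n])%N.
Hypothesis pI_change : sign_change_at (turning n v i) (n - 2) pI.
Hypothesis pJ_change : sign_change_at (turning n v j) (n - 2) pJ.

Let a s := - side n v i (V n v (i + s)).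
Let b s := - side n v j (V n v (i + s)).
Let da s := cross (dir n v (i + s)) (dir n v i).
Let db s := cross (dir n v (i + s)) (dir n v j).
(* the derivative of [a * b] along the edge [e_(i+s)], at its start and at its end *)
Let dstart s := da s * b s + db s * a s.
Let dend s := da s * b s.+1 + db s * a s.+1.

Lemma cross_ij_lt0 : cross (dir n v i) (dir n v j) < 0.
Proof. by case: (chases_signs chase). Qed.

Lemma side_j_Vi_lt0 : side n v j (V n v i) < 0.
Proof. by case: (chases_signs chase). Qed.

Lemma shiftJ m : (i + J + m = j + m %[mod n])%N.
Proof. by rewrite -modnDml iJ_j modnDml. Qed.

Lemma V_shiftJ m : V n v (i + J + m) = V n v (j + m).
Proof. exact/V_eqmod/shiftJ. Qed.

Lemma dir_shiftJ m : dir n v (i + J + m) = dir n v (j + m).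
Proof. exact/dir_eqmod/shiftJ. Qed.

Lemma dir_iJ : dir n v (i + J) = dir n v j.
Proof. by rewrite -[(i + J)%N]addn0 dir_shiftJ addn0. Qed.

Lemma V_shift_n : V n v (i + n) = V n v i.
Proof. by apply: V_eqmod; rewrite modnDr. Qed.

Lemma dir_shift_n : dir n v (i + n) = dir n v i.
Proof. by apply: dir_eqmod; rewrite modnDr. Qed.

Lemma da_gt0 s : (0 < s <= pI)%N -> 0 < da s.
Proof.
case: pI_change => pIN sg; case: s => // s sI.
by apply: (sg s _).1; lia.
Qed.

Lemma da_lt0 s : (pI < s < n)%N -> da s < 0.
Proof.
case: pI_change => pIN sg; case: s => // s sI.
by apply: (sg s _).2; lia.
Qed.

Lemma db_turning s : (J < s)%N -> db s = turning n v j (s - J.+1).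
Proof. by move=> Js; rewrite /db /turning -dir_shiftJ -addnA; congr (cross (dir n v _) _); lia. Qed.

Lemma db_gt0 s : (J < s <= J + pJ)%N -> 0 < db s.
Proof.
case: pJ_change => pJN sg sJ; rewrite db_turning; last by lia.
by apply: (sg _ _).1; lia.
Qed.

Lemma db_lt0 s : (J + pJ < s < n)%N -> db s < 0.
Proof.
case: pJ_change => pJN sg sJ; rewrite db_turning; last by lia.
by apply: (sg _ _).2; lia.
Qed.

Lemma a_gt0 s : (1 < s < n)%N -> 0 < a s.
Proof. by move=> sN; rewrite oppr_gt0 side_V_shift_lt. Qed.

Lemma b_gt0 s : (J.+1 < s <= n)%N -> 0 < b s.
Proof.
move=> sN; rewrite /b oppr_gt0; have [sn | ns] := ltnP s n; last first.
  have -> : s = n by lia.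
  by rewrite V_shift_n side_j_Vi_lt0.
have -> : (i + s = i + J + (s - J))%N by lia.
by rewrite V_shiftJ side_V_shift_lt //; lia.
Qed.

Lemma a_succ s : a s.+1 = a s + da s.
Proof. by rewrite /a /da -side_V_step addnS; ring. Qed.

Lemma b_succ s : b s.+1 = b s + db s.
Proof. by rewrite /b /db -side_V_step addnS; ring. Qed.

Lemma a_ge0 s : 0 <= a s.
Proof. by rewrite oppr_ge0 side_V_le. Qed.

Lemma b_ge0 s : 0 <= b s.
Proof. by rewrite oppr_ge0 side_V_le. Qed.

Lemma b_J1 : b J.+1 = 0.
Proof. by rewrite /b -addn1 addnA V_shiftJ addn1 side_edge_end oppr0. Qed.

Lemma a_n : a n = 0.
Proof. by rewrite /a V_shift_n side_edge_start oppr0. Qed.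

Lemma da_n : da n = 0.
Proof. by rewrite /da dir_shift_n /cross mulrC subrr. Qed.

Lemma J_le_pI : (J <= pI)%N.
Proof.
rewrite leqNgt; apply/negP => pIJ.
have Jn : (pI < J < n)%N by case/andP: J_bounds => _ ->; rewrite pIJ.
have := da_lt0 Jn; rewrite /da dir_iJ cross_antisym.
by have := cross_ij_lt0; lra.
Qed.

Lemma pJ_le : (pJ <= n - J.+1)%N.
Proof.
rewrite leqNgt; apply/negP => JpJ; have [_ sg] := pJ_change.
have sN : (n - J.+1 <= n - 2)%N by case/andP: J_bounds; lia.
have := (sg _ sN).1 JpJ; rewrite /turning -dir_shiftJ -addnA.
rewrite (_ : (J + (n - J.+1).+1 = n)%N); last by case/andP: J_bounds; lia.
by rewrite dir_shift_n; have := cross_ij_lt0; lra.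
Qed.

Lemma cross_dir_shiftJ_lt0 k : (0 < k)%N -> (J + k <= pI)%N ->
  cross (dir n v (i + J)) (dir n v (i + J + k)) < 0.
Proof.
elim: k => // k IH _ Jk; have [-> | k_gt0] := posnP k.
  by rewrite addn1 cross_dir_succ_lt0.
have Jp := J_bounds; apply: (cross_lt0_trans_cone (IH k_gt0 _) _ (da_gt0 _) _ _).
- by lia.
- by rewrite addnS cross_dir_succ_lt0.
- by lia.
- by rewrite -addnA da_gt0 //; lia.
- by rewrite -addnA da_gt0 //; lia.
Qed.

Lemma pI_le : (pI <= J + pJ)%N.
Proof.
rewrite leqNgt; apply/negP => JpJ.
have [[/andP [pJ1 _] _] [/andP [_ pIN] _]] := (pJ_change, pI_change).
have JpJ1 : (J + pJ.+1 <= pI)%N by rewrite addnS.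
have s_bounds : (J + pJ < J + pJ.+1 < n)%N by lia.
have := cross_dir_shiftJ_lt0 (ltn0Sn pJ) JpJ1; have := db_lt0 s_bounds.
by rewrite /db dir_iJ addnA cross_antisym; lra.
Qed.

Lemma dstart_last : dstart (J + pJ.+1) <= 0.
Proof.
have := pI_le; have := pJ_le; have [/andP [pJ1 _] _] := pJ_change => le1 le2.
have [lt | ge] := ltnP (J + pJ.+1) n; last first.
  have -> : (J + pJ.+1 = n)%N by lia.
  by rewrite /dstart da_n a_n !mul0r mulr0 addr0.
have da0 : da (J + pJ.+1) < 0 by apply: da_lt0; lia.
have db0 : db (J + pJ.+1) < 0 by apply: db_lt0; lia.
have a0 : 0 < a (J + pJ.+1) by apply: a_gt0; lia.
have b0 : 0 < b (J + pJ.+1) by apply: b_gt0; lia.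
by rewrite /dstart; nra.
Qed.

Lemma cross_dir_prod_grad_V s k :
  cross (dir n v (i + k)) (prod_grad (V n v (i + s))) = da k * b s + db k * a s.
Proof. by rewrite /prod_grad cross_comb2r mulrC [_ * a s]mulrC. Qed.

Lemma prod_grad_tangent_support q Z : cross (dir n v q) (dir n v i) < 0 ->
  0 < - side n v i Z -> cross (dir n v q) (prod_grad Z) = 0 ->
  cross (dir n v q.+1) (prod_grad Z) <= 0.
Proof.
(* [prod_grad Z] is parallel to [dir q]; whether it points along or against it is read off
   from the cross products with [dir i], via Pluecker's identity *)
move=> qi a0 tangent; have := cross_plucker (dir n v q.+1) (prod_grad Z) (dir n v q) (dir n v i).
rewrite (cross_antisym (prod_grad Z) (dir n v q)) tangent oppr0 mulr0 subr0.
have -> : cross (prod_grad Z) (dir n v i) = side n v i Z * cross (dir n v i) (dir n v j).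
  by rewrite /prod_grad /cross /=; ring.
rewrite (cross_antisym (dir n v q.+1) (dir n v q)) => E.
have : 0 < - cross (dir n v q) (dir n v q.+1) * (side n v i Z * cross (dir n v i) (dir n v j)).
  by rewrite mulr_gt0 ?oppr_gt0 ?cross_dir_succ_lt0 ?nmulr_rgt0 ?cross_ij_lt0 // -oppr_gt0.
by rewrite -E nmulr_lgt0 // => /ltW.
Qed.

Lemma Z_spec_of_support s t : let Z := seg_pt n v (i + s) t in
  0 <= t < 1 -> 0 < - side n v i Z -> 0 < - side n v j Z ->
  (forall X, inP n v X -> cross (psub X Z) (prod_grad Z) <= 0) ->
  (0 < t -> cross (dir n v (i + s)) (prod_grad Z) = 0) ->
  (pI < s <= J + pJ.+1)%N -> (s = J + pJ.+1 -> t = 0) ->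
  (J < s < n)%N -> (s = J.+1 -> 0 < t) -> Z_spec Z.
Proof.
move=> Z t01 a0 b0 supp tangent sI sIt sJ sJt.
have ZP : inP n v Z.
  by rewrite /Z; apply: (seg_pt_inP convex); case/andP: t01 => t0 /ltW t1; rewrite t0 t1.
have [Zmax Zuniq] := disprod_argmax ZP a0 b0 supp.
have [[/andP [pI1 _] _] pJn] := (pI_change, pJ_le).
split=> //; first split; [|split|].
- by exists (((i + s) %% n)%N%:R + t); apply: bparam_seg_pt.
- exists ((i + pI.+1) %% n)%N, ((j + pJ.+1) %% n)%N.
  split; [exact: isD_turning | exact: isD_turning |].
  rewrite !(V_eqmod v (modn_mod _ n)) -V_shiftJ -addnA.
  by apply: in_carc_shift => //; lia.
- rewrite -addn1 -V_shiftJ -addnA addn1 -V_shift_n.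
  by apply: in_oarc_shift => //; lia.
- move=> k kN /(in_edge_seg_pt convex t01 kN) [t_gt0 k_is].
  apply: midpoint_of_tangent => //; rewrite k_is.
    by rewrite (side_eqmod v _ (modn_mod _ n)) side_seg_pt_self.
  by rewrite (dir_eqmod v (modn_mod _ n)) tangent.
Qed.

Lemma Z_at_vertex r : (pI < r.+1 <= J + pJ.+1)%N -> (J.+1 < r.+1 < n)%N ->
  0 <= dend r -> dstart r.+1 <= 0 -> exists Z, Z_spec Z.
Proof.
move=> rI rJ dend_ge0 dstart_le0; have [/andP [pI1 _] _] := pI_change.
exists (V n v (i + r.+1)); rewrite -seg_pt0.
apply: Z_spec_of_support; rewrite ?seg_pt0 ?lexx ?ltr01 ?ltxx //; try lia.
- by apply: a_gt0; lia.
- by apply: b_gt0; lia.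
- apply: (prod_grad_support (q := (i + r)%N)); rewrite -?addnS.
  + by rewrite cross_dir_prod_grad_V.
  + by rewrite cross_dir_prod_grad_V.
  + by rewrite /cross /psub !subrr !mul0r subrr.
Qed.

Lemma Z_in_edge e : (pI < e < J + pJ.+1)%N -> 0 < dstart e -> dend e < 0 ->
  exists Z, Z_spec Z.
Proof.
move=> eB dstart_gt0 dend_lt0.
have [/andP [pI1 _] _] := pI_change; have JI := J_le_pI; have pJn := pJ_le.
have eN : (pI < e < n)%N by lia.
pose t := dstart e / (dstart e - dend e).
have t01 : 0 < t < 1.
  by rewrite divr_gt0 ?ltr_pdivrMr ?mul1r ?dstart_gt0 /=; lra.
have tangent_t : (1 - t) * dstart e + t * dend e = 0.
  by rewrite /t; field; lra.
pose Z := seg_pt n v (i + e) t.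
have aZ : - side n v i Z = (1 - t) * a e + t * a e.+1.
  by rewrite /Z side_seg_pt -addnS /a; ring.
have bZ : - side n v j Z = (1 - t) * b e + t * b e.+1.
  by rewrite /Z side_seg_pt -addnS /b; ring.
have tangent : cross (dir n v (i + e)) (prod_grad Z) = 0.
  rewrite -tangent_t /prod_grad cross_comb2r -/(da e) -/(db e) bZ aZ /dstart /dend.
  by rewrite !(a_succ, b_succ); ring.
have aZ_gt0 : 0 < - side n v i Z.
  have := a_ge0 e.+1; have : 0 < a e by apply: a_gt0; lia.
  by case/andP: t01; rewrite aZ; nra.
have bZ_gt0 : 0 < - side n v j Z.
  have := b_ge0 e; have : 0 < b e.+1 by apply: b_gt0; lia.
  by case/andP: t01; rewrite bZ; nra.
exists Z; apply: Z_spec_of_support; rewrite -/Z ?ltW ?t01 //; try lia.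
- apply: (prod_grad_support (q := (i + e)%N)); rewrite ?tangent //.
    by apply: prod_grad_tangent_support => //; apply: da_lt0.
  by rewrite cross_psub_seg_pt tangent mulr0.
Qed.

Lemma dend_pI_gt0 : dstart pI.+1 <= 0 -> (J < pI)%N /\ 0 < dend pI.
Proof.
move=> dstart_le0; have [/andP [pI1 pIN] _] := pI_change.
have [/andP [pJ1 _] _] := pJ_change; have JI := J_le_pI; have IJ := pI_le.
have JpI : (J < pI)%N.
  rewrite ltn_neqAle JI andbT; apply/eqP => JpI; move: dstart_le0.
  rewrite -JpI /dstart b_J1 mulr0 add0r.
  have : 0 < db J.+1 by apply: db_gt0; lia.
  have : 0 < a J.+1 by apply: a_gt0; lia.
  nra.
split=> //.
have : 0 < da pI by apply: da_gt0; lia.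
have : 0 < db pI by apply: db_gt0; lia.
have : 0 < b pI.+1 by apply: b_gt0; lia.
have : 0 < a pI.+1 by apply: a_gt0; lia.
rewrite /dend; nra.
Qed.

Lemma dend_lt0_at_end e : (pI < e)%N -> e.+1 = n -> dend e < 0.
Proof.
move=> Ie en; rewrite /dend en a_n mulr0 addr0.
have : da e < 0 by apply: da_lt0; lia.
have : 0 < b n by apply: b_gt0; have := J_le_pI; lia.
nra.
Qed.

Lemma Z_exists : exists Z, Z_spec Z.
Proof.
have [/andP [pI1 pIN] _] := pI_change; have [/andP [pJ1 _] _] := pJ_change.
have JI := J_le_pI; have pJn := pJ_le; have IJ := pI_le.
have last_ok : (pI < J + pJ.+1)%N && (dstart (J + pJ.+1) <= 0).
  by rewrite dstart_last andbT; lia.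
have ex_s : exists s, (pI < s)%N && (dstart s <= 0) by exists (J + pJ.+1)%N.
have [s /andP [Is dstart_s] s_min] := ex_minnP ex_s.
have sB : (s <= J + pJ.+1)%N := s_min _ last_ok.
have [e se] : exists e, s = e.+1 by exists s.-1; lia.
have [eI | Ie] : e = pI \/ (pI < e)%N by lia.
  move: dstart_s sB Is; rewrite se eI => dstart_s sB Is.
  have [JpI dend_pI] := dend_pI_gt0 dstart_s.
  by apply: (Z_at_vertex (r := pI)) => //; [lia | lia | apply: ltW].
have dstart_e : 0 < dstart e.
  by rewrite ltNge; apply/negP => de; have := s_min e; rewrite Ie de se ltnn => /(_ isT).
have [dend_e | dend_e] := ltP (dend e) 0.
  by apply: (Z_in_edge (e := e)) => //; lia.
have eN : e.+1 != n by apply/eqP => /(dend_lt0_at_end Ie); rewrite ltNge dend_e.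
by apply: (Z_at_vertex (r := e)); rewrite -?se //; lia.
Qed.

End Search.
End Maximizer.

Theorem lemma4 (R : realType) (n : nat) (v : nat -> R * R) (i j : nat) :
  convex_cw n v -> no_parallel n v ->
  (i < n)%N -> (j < n)%N -> i != j -> chases n v i j ->
  exists Z : R * R,
    (* (1) Z is the unique maximizer of disprod_{l_i,l_j} on P *)
    [/\ inP n v Z,
        (forall Y, inP n v Y -> disprod n v i j Y <= disprod n v i j Z),
        (forall Y, inP n v Y -> disprod n v i j Y = disprod n v i j Z -> Y = Z),
    (* (2) Z on the boundary, in [D_i ↻ D_j] and in (v_{j+1} ↻ v_i) *)
        on_boundary n v Z /\
        (exists ki kj, [/\ isD n v i ki, isD n v j kj &
                           in_carc n v (V n v ki) (V n v kj) Z]) /\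
        in_oarc n v (V n v j.+1) (V n v i) Z &
    (* (3) if Z lies in an edge e_k, it is the midpoint of I_{i,k} and I_{j,k} *)
        forall k, (k < n)%N -> in_edge n v k Z ->
          Z = midpoint (Ipt n v i k) (Ipt n v j k)].
Proof.
move=> convex no_par iN jN ij chase.
have [J JN iJ] := shift_modn_surj i jN.
have J_bounds : (0 < J < n)%N.
  by rewrite JN andbT lt0n; apply: contraNneq ij => J0; rewrite -iJ J0 addn0 modn_small.
have iJ_j : (i + J = j %[mod n])%N by rewrite iJ modn_small.
have [pI pI_change] := turning_sign_change convex no_par i.
have [pJ pJ_change] := turning_sign_change convex no_par j.
exact: (Z_exists convex no_par iN jN ij chase J_bounds iJ_j pI_change pJ_change).
Qed.
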